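(* Let $\alpha,\beta,\mu$ be real parameters with $0<\alpha\leq 1$, $\beta>0$, $0<\mu\leq 1$ and $\beta\neq\mu$. Define $W_0:\mathbb{R}^2_+\to\mathbb{R}^2_+$ by $$W_0(x,y)=\left(\beta y-\frac{\alpha x}{1+x}+x,\ \frac{\alpha x}{1+x}-\mu y+y\right).$$ Then for every integer $p\geq 2$, $W_0$ has no point of prime period $p$ in $\mathbb{R}^2_+$; i.e., every $z\in\mathbb{R}^2_+$ with $W_0^p(z)=z$ for some $p\geq 1$ is a fixed point of $W_0$.
   Context: $\mathbb{R}^2_+=\{(x,y)\in\mathbb{R}^2: x\geq 0,\ y\geq 0\}$; under the stated conditions $W_0$ maps $\mathbb{R}^2_+$ into itself. $W_0^p$ denotes the $p$-th iterate. A point $z$ is periodic if $W_0^p(z)=z$ for some $p\geq1$; the smallest such $p$ is its prime (least) period. *)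

From Stdlib Require Import Reals.
Open Scope R_scope.

Definition W0 (alpha beta mu : R) (z : R * R) : R * R :=
  let (x, y) := z in
  (beta * y - alpha * x / (1 + x) + x, alpha * x / (1 + x) - mu * y + y).

Definition W0_iter (alpha beta mu : R) (p : nat) (z : R * R) : R * R :=
  Nat.iter p (W0 alpha beta mu) z.

Definition in_R2plus (z : R * R) : Prop := 0 <= fst z /\ 0 <= snd z.

Definition has_prime_period (alpha beta mu : R) (p : nat) (z : R * R) : Prop :=
  (1 <= p)%nat /\ W0_iter alpha beta mu p z = z /\
  forall k : nat, (1 <= k < p)%nat -> W0_iter alpha beta mu k z <> z.

(* The total mass x + y changes under W_0 by exactly (beta - mu) y.  Since
   beta <> mu, along any orbit in R^2_+ the mass is monotone, so on a cycle
   it is constant, which forces y = 0 at every point of the cycle.  Applied to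
   the image W_0(x, 0) = (x - a, a) with a = alpha x / (1 + x), this gives
   a = 0, hence x = 0: the origin is the only periodic point. *)

From Stdlib Require Import Reals Lra Lia.
Open Scope R_scope.

Section Lyapunov.
Context {T : Type}.
Variables (f : T -> T) (P : T -> Prop) (V : T -> R).
Hypothesis f_invariant : forall z, P z -> P (f z).
Hypothesis V_nondecreasing : forall z, P z -> V z <= V (f z).

Lemma invariant_iter n z : P z -> P (Nat.iter n f z).
Proof. intros Hz; induction n as [|n IH]; simpl; auto. Qed.

Lemma V_le_iter n z : P z -> V z <= V (Nat.iter n f z).
Proof.
  intros Hz; induction n as [|n IH]; simpl; [lra|].
  pose proof (V_nondecreasing _ (invariant_iter n z Hz)); lra.
Qed.

Lemma periodic_V_step_eq p z :
  (1 <= p)%nat -> P z -> Nat.iter p f z = z -> V (f z) = V z.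
Proof.
  intros Hp Hz Hper; destruct p as [|n]; [lia|].
  pose proof (V_le_iter n (f z) (f_invariant z Hz)) as Hle.
  rewrite <- Nat.iter_succ_r, Hper in Hle.
  pose proof (V_nondecreasing z Hz); lra.
Qed.

End Lyapunov.

Lemma periodic_image {T : Type} (f : T -> T) p z :
  Nat.iter p f z = z -> Nat.iter p f (f z) = f z.
Proof. intros Hper; rewrite Nat.iter_swap, Hper; reflexivity. Qed.

Section W0_dynamics.
Variables alpha beta mu : R.
Hypothesis Ha : 0 < alpha <= 1.
Hypothesis Hb : 0 < beta.
Hypothesis Hm : 0 < mu <= 1.
Hypothesis Hbm : beta <> mu.

Let W := W0 alpha beta mu.

Lemma saturation_bounds x : 0 <= x -> 0 <= alpha * x / (1 + x) <= x.
Proof.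
  intros Hx.
  assert (Hq : alpha * x / (1 + x) * (1 + x) = alpha * x) by (field; lra).
  set (q := alpha * x / (1 + x)) in *.
  split; nra.
Qed.

Lemma W0_R2plus z : in_R2plus z -> in_R2plus (W z).
Proof.
  destruct z as [x y]; unfold in_R2plus, W, W0; simpl; intros [Hx Hy].
  pose proof (saturation_bounds x Hx); split; nra.
Qed.

Definition mass (z : R * R) : R := fst z + snd z.

Lemma mass_W0 z : mass (W z) = mass z + (beta - mu) * snd z.
Proof. destruct z as [x y]; unfold mass, W, W0; simpl; ring. Qed.

Lemma periodic_snd_eq0 p z :
  (1 <= p)%nat -> in_R2plus z -> Nat.iter p W z = z -> snd z = 0.
Proof.
  intros Hp Hz Hper.
  set (V z := (beta - mu) * mass z).
  assert (HV : forall z, V (W z) - V z = (beta - mu)² * snd z)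
    by (intros; unfold V, Rsqr; rewrite mass_W0; ring).
  assert (Hsq : 0 < (beta - mu)²) by (apply Rlt_0_sqr; lra).
  assert (Hmono : forall z, in_R2plus z -> V z <= V (W z)).
  { intros w [_ Hw]; pose proof (HV w); nra. }
  pose proof (periodic_V_step_eq W in_R2plus V W0_R2plus Hmono p z Hp Hz Hper).
  pose proof (HV z); destruct Hz; nra.
Qed.

Lemma periodic_R2plus_origin p z :
  (1 <= p)%nat -> in_R2plus z -> Nat.iter p W z = z -> z = (0, 0).
Proof.
  intros Hp Hz Hper.
  pose proof (periodic_snd_eq0 p z Hp Hz Hper) as Hy.
  pose proof (periodic_snd_eq0 p (W z) Hp (W0_R2plus z Hz)
                (periodic_image W p z Hper)) as HWy.
  destruct z as [x y]; simpl in Hy; subst y.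
  unfold W, W0 in HWy; simpl in HWy.
  destruct Hz as [Hx _]; simpl in Hx.
  assert (Hq : alpha * x / (1 + x) * (1 + x) = alpha * x) by (field; lra).
  assert (x = 0) by nra.
  subst; reflexivity.
Qed.

Lemma W0_origin : W (0, 0) = (0, 0).
Proof. unfold W, W0; f_equal; field; lra. Qed.

End W0_dynamics.

Theorem theorem2 (alpha beta mu : R)
  (Ha : 0 < alpha <= 1) (Hb : 0 < beta) (Hm : 0 < mu <= 1) (Hbm : beta <> mu) :
  (forall (p : nat) (z : R * R), (2 <= p)%nat -> in_R2plus z ->
     ~ has_prime_period alpha beta mu p z) /\
  (forall (p : nat) (z : R * R), (1 <= p)%nat -> in_R2plus z ->
     W0_iter alpha beta mu p z = z -> W0 alpha beta mu z = z).
Proof.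
  assert (Hfixed : forall (p : nat) (z : R * R), (1 <= p)%nat -> in_R2plus z ->
            W0_iter alpha beta mu p z = z -> W0 alpha beta mu z = z).
  { intros p z Hp Hz Hper.
    rewrite (periodic_R2plus_origin alpha beta mu Ha Hb Hm Hbm p z Hp Hz Hper).
    exact (W0_origin alpha beta mu). }
  split; [|exact Hfixed].
  intros p z Hp Hz [Hp1 [Hper Hleast]].
  apply (Hleast 1%nat); [lia|].
  exact (Hfixed p z Hp1 Hz Hper).
Qed.
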